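(* Let $d=5$ and $n\ge4$. Let $(p_1,\dots,p_n)\in V(I_{5,n})$ and $z_1,\dots,z_n\in\mathbb{C}^4$. For each $j\in\{1,\dots,n\}$, let $W_j$ be the $4\times n$ matrix with columns $|1\rangle,\dots,|j-1\rangle,z_j,|j+1\rangle,\dots,|n\rangle$, and $M^{(j)}=W_j^T\,C\,P_j\,W_j$. Then $M^{(j)}$ is skew symmetric of rank $\le2$, and its entries are $M^{(j)}_{ik}=\langle ijk\rangle$ for $i,k\ne j$, $M^{(j)}_{ij}=\langle ij\rangle$ for $i\ne j$, $M^{(j)}_{jk}=\langle jk\rangle$ for $k\neq j$, and $M^{(j)}_{jj}=0$. In particular all $4\times4$ Pfaffians of $M^{(j)}$ vanish. Furthermore, the $n\times(n^2+n)$ matrix $(S\,|\,T_1\,|\,\cdots\,|\,T_n)$ has rank $\le4$.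
   Context: $x\cdot y=-x_1y_1+x_2y_2+\cdots+x_5y_5$ on $\mathbb{C}^5$; $V(I_{5,n})$ is the set of $(p_1,\dots,p_n)\in(\mathbb{C}^5)^n$ with $p_i\cdot p_i=0$ for all $i$ and $\sum_ip_i=0$. Dirac matrices for $d=5$ ($4\times4$): with $A=\begin{pmatrix}0&1\\-1&0\end{pmatrix}$, $B=\begin{pmatrix}0&1\\1&0\end{pmatrix}$ and $\otimes$ the Kronecker product, $\Gamma_1=A\otimes\mathrm{diag}(-1,1)$, $\Gamma_2=B\otimes\mathrm{diag}(-1,1)$, $\Gamma_3=\mathrm{Id}_2\otimes B$, $\Gamma_4=\mathrm{Id}_2\otimes\begin{pmatrix}0&-i\\i&0\end{pmatrix}$, $\Gamma_5=-i\,\Gamma_1\Gamma_2\Gamma_3\Gamma_4$. Charge conjugation matrix $C=\Gamma_4\Gamma_1$. $P_i=-p_{i1}\Gamma_1+p_{i2}\Gamma_2+\cdots+p_{i5}\Gamma_5$, $|i\rangle=P_iz_i$, $\langle ij\rangle=|i\rangle^TC|j\rangle$, $\langle ijk\rangle=|i\rangle^TCP_j|k\rangle$, $S=(\langle ij\rangle)_{i,j}$, $T_j=(\langle ijk\rangle)_{i,k}$. *)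

From mathcomp Require Import all_boot all_order all_algebra.
Set Implicit Arguments. Unset Strict Implicit. Unset Printing Implicit Defensive.
Import Order.TTheory GRing.Theory Num.Theory.
Local Open Scope ring_scope.

Section Spinors.
Variable C : numClosedFieldType.

(* vectors of C^5 are functions 'I_5 -> C; component k (1-based in the
   paper) is x (inord (k-1)) *)
Definition cmp (x : 'I_5 -> C) (k : nat) : C := x (inord k.-1).

Definition mdot (x y : 'I_5 -> C) : C :=
  - cmp x 1 * cmp y 1 + cmp x 2 * cmp y 2 + cmp x 3 * cmp y 3
  + cmp x 4 * cmp y 4 + cmp x 5 * cmp y 5.

Definition in_V (n : nat) (p : 'I_n -> 'I_5 -> C) : Prop :=
  (forall i, mdot (p i) (p i) = 0) /\ (forall k : 'I_5, \sum_(i < n) p i k = 0).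

Definition mx2 (a b c d : C) : 'M[C]_2 :=
  \matrix_(r < 2, s < 2)
    if (r == 0 :> nat) then (if (s == 0 :> nat) then a else b)
    else (if (s == 0 :> nat) then c else d).

Definition kron2 (A B : 'M[C]_2) : 'M[C]_4 :=
  \matrix_(r < 4, s < 4)
    (A (inord (r %/ 2)) (inord (s %/ 2)) * B (inord (r %% 2)) (inord (s %% 2))).

Definition mA : 'M[C]_2 := mx2 0 1 (-1) 0.
Definition mB : 'M[C]_2 := mx2 0 1 1 0.
Definition dm1 : 'M[C]_2 := mx2 (-1) 0 0 1.
Definition sy : 'M[C]_2 := mx2 0 (- 'i) 'i 0.

Definition G1 : 'M[C]_4 := kron2 mA dm1.
Definition G2 : 'M[C]_4 := kron2 mB dm1.
Definition G3 : 'M[C]_4 := kron2 1%:M mB.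
Definition G4 : 'M[C]_4 := kron2 1%:M sy.
Definition G5 : 'M[C]_4 := (- 'i) *: (G1 *m G2 *m G3 *m G4).

Definition Cmat : 'M[C]_4 := G4 *m G1.

Definition Pm (x : 'I_5 -> C) : 'M[C]_4 :=
  - (cmp x 1 *: G1) + cmp x 2 *: G2 + cmp x 3 *: G3 + cmp x 4 *: G4 + cmp x 5 *: G5.

Variables (n : nat) (p : 'I_n -> 'I_5 -> C) (z : 'I_n -> 'cV[C]_4).

Definition ket (i : 'I_n) : 'cV[C]_4 := Pm (p i) *m z i.

Definition br2 (i j : 'I_n) : C := ((ket i)^T *m Cmat *m ket j) 0 0.

Definition br3 (i j k : 'I_n) : C := ((ket i)^T *m Cmat *m Pm (p j) *m ket k) 0 0.

Definition Smat : 'M[C]_n := \matrix_(i < n, j < n) br2 i j.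
Definition Tmat (j : 'I_n) : 'M[C]_n := \matrix_(i < n, k < n) br3 i j k.

Definition Wmat (j : 'I_n) : 'M[C]_(4, n) :=
  \matrix_(r < 4, c < n) (if c == j then z j else ket c) r 0.

Definition Mj (j : 'I_n) : 'M[C]_n := (Wmat j)^T *m Cmat *m Pm (p j) *m Wmat j.

(* (S | T_1 | ... | T_n): row i is (row i of S) followed by the rows i of
   T_1, ..., T_n; column n + (j*n + k) holds (T_j)_{ik} (mxvec is row-major) *)
Definition STmat : 'M[C]_(n, n + n * n) :=
  row_mx Smat (\matrix_(i < n) mxvec (\matrix_(j < n, k < n) Tmat j i k)).

End Spinors.

Definition pf4 (C : numClosedFieldType) (n : nat) (M : 'M[C]_n) (a b c d : 'I_n) : C :=
  M a b * M c d - M a c * M b d + M a d * M b c.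

From mathcomp Require Import all_boot all_order all_algebra.
From mathcomp Require Import ring.
Import Order.TTheory GRing.Theory Num.Theory.
Set Implicit Arguments.
Unset Strict Implicit.
Unset Printing Implicit Defensive.

Local Open Scope ring_scope.

(* P_j^2 = (p_j . p_j) Id = 0 forces rank P_j <= 2, hence rank M^(j) <= 2 for
   M^(j) = W_j^T (C P_j) W_j.  Since C P_j is antisymmetric so is M^(j), and a
   skew matrix of rank <= 2 has vanishing 4x4 Pfaffians because the Pfaffian
   squares to the determinant of the corresponding principal 4x4 minor.  The
   relation P_j^T C = C P_j identifies the entries of M^(j) with brackets.
   Finally every entry of S and of the T_j is |i>^T times a vector of C^4, so
   (S | T_1 | ... | T_n) = K^T B with K the 4 x n matrix of the spinors |i>.
   Only p_j . p_j = 0 is used. *)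

Lemma skew_mxE (R : zmodType) n (M : 'M[R]_n) i j : M^T = - M -> M j i = - M i j.
Proof. by move=> skM; have := congr1 (fun A : 'M_n => A i j) skM; rewrite !mxE. Qed.

Lemma skew_mx_diag0 (R : numDomainType) n (M : 'M[R]_n) i : M^T = - M -> M i i = 0.
Proof.
move=> /skew_mxE skM; apply/eqP.
by rewrite -[_ == 0](mulrn_eq0 _ 2) mulr2n {1}skM addNr.
Qed.

Lemma trmx_gram (R : comPzRingType) m n (A : 'M[R]_m) (W : 'M[R]_(m, n)) :
  A^T = - A -> (W^T *m A *m W)^T = - (W^T *m A *m W).
Proof. by move=> skA; rewrite !trmx_mul trmxK skA mulNmx mulmxN mulmxA. Qed.

Lemma gram_mxE (R : comPzRingType) m n (A : 'M[R]_m) (W : 'M[R]_(m, n)) i k :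
  (W^T *m A *m W) i k = ((col i W)^T *m A *m col k W) 0 0.
Proof.
rewrite !mxE; apply: eq_bigr => r _; rewrite !mxE; congr (_ * _).
by apply: eq_bigr => s _; rewrite !mxE.
Qed.

Lemma mxrank_square0 (F : fieldType) n (A : 'M[F]_n) :
  A *m A = 0 -> ((\rank A).*2 <= n)%N.
Proof.
move=> AA0; have := mxrank_mul_min A A; rewrite AA0 mxrank0 -addnn.
by rewrite leqn0 subn_eq0.
Qed.

Lemma mxrank_mxsub (F : fieldType) m n m' n' (f : 'I_m' -> 'I_m) (g : 'I_n' -> 'I_n)
    (M : 'M[F]_(m, n)) :
  (\rank (mxsub f g M) <= \rank M)%N.
Proof.
rewrite mxsubrc; apply: leq_trans (mxrankS (rowsub_sub _ _)) _.
by rewrite -mxrank_tr trmx_mxsub -[leqRHS]mxrank_tr mxrankS ?rowsub_sub.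
Qed.

Definition idx4 {I : Type} (a b c d : I) (k : 'I_4) : I := nth a [:: a; b; c; d] k.

Lemma det_skew_principal4 (C : numClosedFieldType) n (M : 'M[C]_n) (a b c d : 'I_n) :
  M^T = - M -> \det (mxsub (idx4 a b c d) (idx4 a b c d) M) = pf4 M a b c d ^+ 2.
Proof.
move=> skM; have d0 i : M i i = 0 by apply: skew_mx_diag0.
do 3 rewrite !(expand_det_row _ 0) /cofactor !big_ord_recl !big_ord0.
rewrite !det_mx11 !mxE /idx4 /bump /= /pf4 !d0.
rewrite !(skew_mxE a b skM, skew_mxE a c skM, skew_mxE a d skM).
rewrite !(skew_mxE b c skM, skew_mxE b d skM, skew_mxE c d skM).
ring.
Qed.

Lemma pf4_skew_rank2 (C : numClosedFieldType) n (M : 'M[C]_n) (a b c d : 'I_n) :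
  M^T = - M -> (\rank M <= 2)%N -> pf4 M a b c d = 0.
Proof.
move=> skM rkM; apply/eqP; rewrite -sqrf_eq0 -det_skew_principal4 //.
apply: contraTT rkM => /negbTE det_nz; rewrite -ltnNge.
have /mxrank_unit rk4 : mxsub (idx4 a b c d) (idx4 a b c d) M \in unitmx.
  by rewrite unitmxE unitfE det_nz.
by apply: leq_trans (mxrank_mxsub (idx4 a b c d) (idx4 a b c d) M); rewrite rk4.
Qed.

Section DiracMatrices.
Variable C : numClosedFieldType.

Definition mx4 (rows : seq (seq C)) : 'M[C]_4 :=
  \matrix_(r < 4, s < 4) nth 0 (nth [::] rows r) s.

Lemma sqrCi_mul : 'i * 'i = -1 :> C. Proof. by rewrite -expr2 sqrCi. Qed.

Lemma eq_inord2 (a b : nat) : (a < 2)%N -> (b < 2)%N ->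
  ((inord a : 'I_2) == inord b) = (a == b).
Proof. by move=> ha hb; rewrite -(inj_eq val_inj) /= !inordK. Qed.

Ltac entrywise := apply/matrixP;
  case=> [[|[|[|[|//]]]] ?]; case=> [[|[|[|[|//]]]] ?];
  rewrite !(mxE, big_ord_recl, big_ord0) /= ?inordK ?eq_inord2 //=;
  try ring: sqrCi_mul.

Lemma G1E : G1 C = mx4 [:: [:: 0;  0; -1; 0];
                          [:: 0;  0;  0; 1];
                          [:: 1;  0;  0; 0];
                          [:: 0; -1;  0; 0]].
Proof. entrywise. Qed.

Lemma G2E : G2 C = mx4 [:: [::  0; 0; -1; 0];
                          [::  0; 0;  0; 1];
                          [:: -1; 0;  0; 0];
                          [::  0; 1;  0; 0]].
Proof. entrywise. Qed.

Lemma G3E : G3 C = mx4 [:: [:: 0; 1; 0; 0];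
                          [:: 1; 0; 0; 0];
                          [:: 0; 0; 0; 1];
                          [:: 0; 0; 1; 0]].
Proof. entrywise. Qed.

Lemma G4E : G4 C = mx4 [:: [::  0; -'i;  0;   0];
                          [:: 'i;   0;  0;   0];
                          [::  0;   0;  0; -'i];
                          [::  0;   0; 'i;   0]].
Proof. entrywise. Qed.

Lemma G5E : G5 C = mx4 [:: [:: 1;  0;  0; 0];
                          [:: 0; -1;  0; 0];
                          [:: 0;  0; -1; 0];
                          [:: 0;  0;  0; 1]].
Proof.
have G12 : G1 C *m G2 C =
    mx4 [:: [:: 1; 0; 0; 0]; [:: 0; 1; 0; 0]; [:: 0; 0; -1; 0]; [:: 0; 0; 0; -1]].
  by rewrite G1E G2E; entrywise.
have G123 : G1 C *m G2 C *m G3 C =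
    mx4 [:: [:: 0; 1; 0; 0]; [:: 1; 0; 0; 0]; [:: 0; 0; 0; -1]; [:: 0; 0; -1; 0]].
  by rewrite G12 G3E; entrywise.
have G1234 : G1 C *m G2 C *m G3 C *m G4 C =
    mx4 [:: [:: 'i; 0; 0; 0]; [:: 0; -'i; 0; 0]; [:: 0; 0; -'i; 0]; [:: 0; 0; 0; 'i]].
  by rewrite G123 G4E; entrywise.
by rewrite /G5 G1234; entrywise.
Qed.

Lemma CmatE : Cmat C = mx4 [:: [::  0;   0;   0; -'i];
                              [::  0;   0; -'i;   0];
                              [::  0;  'i;   0;   0];
                              [:: 'i;   0;   0;   0]].
Proof. by rewrite /Cmat G4E G1E; entrywise. Qed.

Lemma PmE (x : 'I_5 -> C) :
  let: (x1, x2, x3, x4, x5) := (cmp x 1, cmp x 2, cmp x 3, cmp x 4, cmp x 5) in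
  Pm x = mx4 [:: [:: x5; x3 - 'i * x4; x1 - x2; 0];
                 [:: x3 + 'i * x4; - x5; 0; x2 - x1];
                 [:: - x1 - x2; 0; - x5; x3 - 'i * x4];
                 [:: 0; x1 + x2; x3 + 'i * x4; x5]].
Proof. by rewrite /Pm G1E G2E G3E G4E G5E; entrywise. Qed.

Lemma trmx_Cmat_Pm (x : 'I_5 -> C) : (Cmat C *m Pm x)^T = - (Cmat C *m Pm x).
Proof. by rewrite CmatE PmE; entrywise. Qed.

Lemma trmx_Pm_Cmat (x : 'I_5 -> C) : (Pm x)^T *m Cmat C = Cmat C *m Pm x.
Proof. by rewrite CmatE PmE; entrywise. Qed.

Lemma Pm_sqr (x : 'I_5 -> C) : Pm x *m Pm x = mdot x x *: 1%:M.
Proof. by rewrite PmE /mdot; entrywise. Qed.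

End DiracMatrices.

Section SpinorBrackets.
Variables (C : numClosedFieldType) (n : nat).
Variables (p : 'I_n -> 'I_5 -> C) (z : 'I_n -> 'cV[C]_4).

Lemma col_Wmat j c : col c (Wmat p z j) = if c == j then z j else ket p z c.
Proof. by apply/matrixP => r s; rewrite (ord1 s) !mxE. Qed.

Lemma Mj_gram j : Mj p z j = (Wmat p z j)^T *m (Cmat C *m Pm (p j)) *m Wmat p z j.
Proof. by rewrite /Mj -(mulmxA _ (Cmat C)). Qed.

Lemma trmx_Mj j : (Mj p z j)^T = - Mj p z j.
Proof. by rewrite Mj_gram trmx_gram // trmx_Cmat_Pm. Qed.

Lemma mxrank_Mj j : mdot (p j) (p j) = 0 -> (\rank (Mj p z j) <= 2)%N.
Proof.
move=> null_pj; rewrite /Mj.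
apply: leq_trans (mxrankM_maxl _ _) _; apply: leq_trans (mxrankM_maxr _ _) _.
rewrite -(leq_double _ 2); apply: mxrank_square0.
by rewrite Pm_sqr null_pj scale0r.
Qed.

Lemma Mj_br3E j i k : i != j -> k != j -> Mj p z j i k = br3 p z i j k.
Proof.
by move=> /negPf ij /negPf kj; rewrite Mj_gram gram_mxE !col_Wmat ij kj /br3 !mulmxA.
Qed.

Lemma Mj_colE j i : i != j -> Mj p z j i j = br2 p z i j.
Proof.
by move=> /negPf ij; rewrite Mj_gram gram_mxE !col_Wmat ij eqxx /br2 /ket !mulmxA.
Qed.

Lemma Mj_rowE j k : k != j -> Mj p z j j k = br2 p z j k.
Proof.
move=> /negPf kj; rewrite Mj_gram gram_mxE !col_Wmat kj eqxx /br2 /ket.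
by rewrite trmx_mul -(mulmxA _ _ (Cmat C)) trmx_Pm_Cmat.
Qed.

Definition ketmx : 'M[C]_(4, n) := \matrix_(r, c) ket p z c r 0.

Lemma STmat_ketmx : exists B : 'M[C]_(4, n + n * n), STmat p z = ketmx^T *m B.
Proof.
have col_ketmx c : col c ketmx = ket p z c.
  by apply/matrixP => r s; rewrite (ord1 s) !mxE.
pose Y := \matrix_(r < 4)
  mxvec (\matrix_(j < n, k < n) (Cmat C *m (Pm (p j) *m ket p z k)) r 0).
exists (row_mx (Cmat C *m ketmx) Y); rewrite /STmat mul_mx_row; congr row_mx.
  by apply/matrixP => i k; rewrite mulmxA gram_mxE !col_ketmx mxE.
apply/matrixP => i c; case/mxvec_indexP: c => j k.
rewrite [LHS]mxE mxvecE [LHS]mxE [LHS]mxE /br3.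
rewrite -(mulmxA _ (Pm (p j))) -(mulmxA _ (Cmat C)) [LHS]mxE [RHS]mxE.
apply: eq_bigr => r _; congr (_ * _); first by rewrite !mxE.
by rewrite [RHS]mxE mxvecE mxE.
Qed.

End SpinorBrackets.

Theorem mainTheorem10 (C : numClosedFieldType) (n : nat) (hn : (4 <= n)%N)
  (p : 'I_n -> 'I_5 -> C) (z : 'I_n -> 'cV[C]_4) :
  in_V p ->
  (forall j : 'I_n,
     (Mj p z j)^T = - Mj p z j
     /\ (\rank (Mj p z j) <= 2)%N
     /\ (forall i k : 'I_n, i != j -> k != j -> Mj p z j i k = br3 p z i j k)
     /\ (forall i : 'I_n, i != j -> Mj p z j i j = br2 p z i j)
     /\ (forall k : 'I_n, k != j -> Mj p z j j k = br2 p z j k)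
     /\ Mj p z j j j = 0
     /\ (forall a b c d : 'I_n, (a < b)%N -> (b < c)%N -> (c < d)%N ->
           pf4 (Mj p z j) a b c d = 0))
  /\ (\rank (STmat p z) <= 4)%N.
Proof.
move=> [null_p _]; split=> [j|].
  have rkMj := mxrank_Mj z (null_p j).
  do 6?split; [exact: trmx_Mj | exact: rkMj | exact: Mj_br3E | exact: Mj_colE
    | exact: Mj_rowE | exact/skew_mx_diag0/trmx_Mj | ].
  by move=> a b c d _ _ _; apply: pf4_skew_rank2 (trmx_Mj _ _ _) rkMj.
have [B ->] := STmat_ketmx p z.
exact: leq_trans (mxrankM_maxl _ _) (rank_leq_col _).
Qed.
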